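(* Let $X$ be a smooth Minkowski plane and $A\subset X$ finite. If $A$ is neither a double cluster nor a pseudo double cluster, then $\mathrm{FT}(A)\subseteq A\cup\operatorname{int}\operatorname{conv}A$.
   Context: A Minkowski plane is a two-dimensional real normed space $(X,\|\cdot\|)$ with unit ball $B$; it is smooth if every boundary point of $B$ has a unique supporting line. A proper exposed face of $B$ is the intersection of $B$ with a supporting line. For finite $A$, $\mathrm{FT}(A)$ is the set of minimizers of $\mathbf{x}\mapsto\sum_{\mathbf{a}\in A}\|\mathbf{x}-\mathbf{a}\|$ (Fermat-Torricelli points). A set $C=\{\mathbf{x}_1,\dots,\mathbf{x}_m,\mathbf{y}_1,\dots,\mathbf{y}_m\}$ is a double cluster with pairs $\mathbf{x}_i,\mathbf{y}_i$ if all $\frac{\mathbf{x}_i-\mathbf{y}_i}{\|\mathbf{x}_i-\mathbf{y}_i\|}$ lie in the same proper exposed face of $B$. A pseudo double cluster is the union of a double cluster $C$, a Fermat-Torricelli point of $C$ (its centre), and one further arbitrary point. $\operatorname{int}$ denotes interior. *)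

(* the Minkowski plane is modelled as R^2 = R*R with an
   arbitrary norm N (every 2-dimensional real normed space is isometric to
   such a space). *)
From Stdlib Require Import Reals List.
Open Scope R_scope.

Definition pt := (R * R)%type.

Definition vadd (p q : pt) : pt := (fst p + fst q, snd p + snd q).
Definition vsub (p q : pt) : pt := (fst p - fst q, snd p - snd q).
Definition vscale (k : R) (p : pt) : pt := (k * fst p, k * snd p).

Definition is_norm (N : pt -> R) : Prop :=
  (forall x, N x = 0 -> x = (0, 0)) /\
  (forall k x, N (vscale k x) = Rabs k * N x) /\
  (forall x y, N (vadd x y) <= N x + N y).

Definition ball_B (N : pt -> R) (p : pt) : Prop := N p <= 1.

Definition is_line (L : pt -> Prop) : Prop :=
  exists a b c : R, (a <> 0 \/ b <> 0) /\
    (forall p, L p <-> a * fst p + b * snd p = c).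

Definition supporting_line (N : pt -> R) (L : pt -> Prop) : Prop :=
  exists a b c : R, (a <> 0 \/ b <> 0) /\
    (forall p, L p <-> a * fst p + b * snd p = c) /\
    (exists y, ball_B N y /\ L y) /\
    ((forall y, ball_B N y -> a * fst y + b * snd y <= c) \/
     (forall y, ball_B N y -> a * fst y + b * snd y >= c)).

Definition smooth (N : pt -> R) : Prop :=
  forall x, N x = 1 ->
  forall L1 L2, supporting_line N L1 -> supporting_line N L2 ->
  L1 x -> L2 x -> forall p, L1 p <-> L2 p.

Definition proper_exposed_face (N : pt -> R) (F : pt -> Prop) : Prop :=
  exists L, supporting_line N L /\ (forall p, F p <-> (ball_B N p /\ L p)).

Fixpoint sumdist (N : pt -> R) (l : list pt) (p : pt) : R :=
  match l with
  | nil => 0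
  | a :: l' => N (vsub p a) + sumdist N l' p
  end.

Definition FT (N : pt -> R) (l : list pt) (p : pt) : Prop :=
  forall q, sumdist N l p <= sumdist N l q.

Definition dc_data (N : pt -> R) (xs ys : list pt) : Prop :=
  length xs = length ys /\ (0 < length xs)%nat /\ NoDup (xs ++ ys) /\
  exists F, proper_exposed_face N F /\
    forall xy, In xy (combine xs ys) ->
      F (vscale (/ N (vsub (fst xy) (snd xy))) (vsub (fst xy) (snd xy))).

Definition is_double_cluster (N : pt -> R) (S : pt -> Prop) : Prop :=
  exists xs ys, dc_data N xs ys /\ (forall z, S z <-> In z (xs ++ ys)).

(* pseudo double cluster: C u {centre} u {one further arbitrary point} *)
Definition is_pseudo_double_cluster (N : pt -> R) (S : pt -> Prop) : Prop :=
  exists xs ys c q, dc_data N xs ys /\ FT N (xs ++ ys) c /\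
    (forall z, S z <-> (In z (xs ++ ys) \/ z = c \/ z = q)).

Definition conv (l : list pt) (p : pt) : Prop :=
  exists ws : list R, length ws = length l /\ (forall w, In w ws -> 0 <= w) /\
    fold_right Rplus 0 ws = 1 /\
    p = fold_right (fun wa acc => vadd (vscale (fst wa) (snd wa)) acc) (0, 0)
          (combine ws l).

Definition norm_interior (N : pt -> R) (S : pt -> Prop) (p : pt) : Prop :=
  exists e, 0 < e /\ forall q, N (vsub q p) < e -> S q.

(* Let [p] be a Fermat-Torricelli point of [A] outside [A].  In a smooth plane
   the norm is differentiable away from [0], so first-order optimality says that
   the norming functionals [phi_a] of the vectors [p - a] sum to zero.
   If [p] is not an interior point of [conv A], some line through [p] has all of
   [A] on one side.  The norming map is monotone along the unit circle, so the
   vanishing sum forces every [phi_a] to be [g] or [- g], where [g] norms the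
   direction of that line, with both signs equally often.  Then [g] norms
   [x - p] and [p - y] for the points [x], [y] of the two classes, hence every
   [x - y]: all these directions lie in the exposed face [{g = 1}] of the unit
   ball and [A] is a double cluster.  Otherwise the vectors [a - p] positively
   span the plane and [p] is interior.  The pseudo-double-cluster hypothesis
   only concerns Fermat-Torricelli points in [A]. *)

From Stdlib Require Import Reals List Lra Lia Psatz Classical ClassicalEpsilon.
Open Scope R_scope.

Definition dot (f x : pt) : R := fst f * fst x + snd f * snd x.

Definition cross (x d : pt) : R := fst x * snd d - snd x * fst d.

Lemma pt_ext (p q : pt) : fst p = fst q -> snd p = snd q -> p = q.
Proof. destruct p, q; simpl; intros; subst; reflexivity. Qed.

Ltac pt_ring := unfold vadd, vsub, vscale, dot, cross; apply pt_ext; simpl; ring.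

Lemma dot_vadd f u w : dot f (vadd u w) = dot f u + dot f w.
Proof. unfold dot, vadd; simpl; ring. Qed.

Lemma dot_vscale f k z : dot f (vscale k z) = k * dot f z.
Proof. unfold dot, vscale; simpl; ring. Qed.

Lemma dot_vscalel f k z : dot (vscale k f) z = k * dot f z.
Proof. unfold dot, vscale; simpl; ring. Qed.

Lemma cross_vadd z u w : cross z (vadd u w) = cross z u + cross z w.
Proof. unfold cross, vadd; simpl; ring. Qed.

Lemma cross_vscale z k u : cross z (vscale k u) = k * cross z u.
Proof. unfold cross, vscale; simpl; ring. Qed.

Lemma pt_neq0_sqr (z : pt) : z <> (0,0) -> 0 < fst z * fst z + snd z * snd z.
Proof.
  destruct z as [z1 z2]; simpl; intros Hz.
  destruct (Req_dec z1 0); [destruct (Req_dec z2 0)|]; [subst; tauto|nra|nra].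
Qed.

Lemma dot_self_gt0 z : z <> (0,0) -> 0 < dot z z.
Proof. apply pt_neq0_sqr. Qed.

Lemma vsub_neq0 a b : a <> b -> vsub a b <> (0,0).
Proof.
  intros H Hz. apply H. destruct a, b; unfold vsub in Hz; simpl in Hz.
  injection Hz; intros. f_equal; lra.
Qed.

Lemma parallel_eq_scale x d : x <> (0,0) -> cross x d = 0 ->
  d = vscale (dot x d / dot x x) x.
Proof.
  intros Hx Hc. pose proof (pt_neq0_sqr x Hx) as Hr.
  destruct x as [x1 x2], d as [d1 d2]; unfold cross, dot, vscale in *; simpl in *.
  apply pt_ext; simpl.
  - transitivity ((x1 * (x1 * d1 + x2 * d2) - x2 * (x1 * d2 - x2 * d1)) / (x1 * x1 + x2 * x2));
      [field; lra|]. rewrite Hc. field. lra.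
  - transitivity ((x2 * (x1 * d1 + x2 * d2) + x1 * (x1 * d2 - x2 * d1)) / (x1 * x1 + x2 * x2));
      [field; lra|]. rewrite Hc. field. lra.
Qed.

Lemma eq_of_dot_cross (z w : pt) : z <> (0,0) ->
  dot z w = dot z z -> cross z w = 0 -> w = z.
Proof.
  intros Hz E1 E2. rewrite (parallel_eq_scale z w Hz E2), E1.
  pose proof (dot_self_gt0 z Hz). unfold Rdiv. rewrite Rinv_r by lra. pt_ring.
Qed.

Lemma eq_of_cross0 f g u : cross f g = 0 -> dot f u = dot g u -> dot f u <> 0 -> f = g.
Proof.
  destruct f as [f1 f2], g as [g1 g2], u as [u1 u2]; unfold cross, dot; simpl.
  intros C E D. apply pt_ext; simpl; apply Rmult_eq_reg_r with (f1 * u1 + f2 * u2); auto.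
  - transitivity (f1 * (g1 * u1 + g2 * u2)); [rewrite E; ring|].
    replace (f1 * (g1 * u1 + g2 * u2)) with (g1 * (f1 * u1 + f2 * u2) + u2 * (f1 * g2 - f2 * g1))
      by ring. rewrite C. ring.
  - transitivity (f2 * (g1 * u1 + g2 * u2)); [rewrite E; ring|].
    replace (f2 * (g1 * u1 + g2 * u2)) with (g2 * (f1 * u1 + f2 * u2) - u1 * (f1 * g2 - f2 * g1))
      by ring. rewrite C. ring.
Qed.

Lemma cross_mul_cross g f v u :
  cross g f * cross v u = dot g v * dot f u - dot g u * dot f v.
Proof. unfold cross, dot; ring. Qed.

Lemma mul_eq_bounds_cases (A B a b : R) : 0 < A -> 0 < B -> -A <= a <= A -> -B <= b <= B ->
  a * b = A * B -> (a = A /\ b = B) \/ (a = -A /\ b = -B).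
Proof.
  intros HA HB Ha Hb E. destruct (Rle_lt_dec 0 a) as [H|H].
  - left. assert (Ea : a = A).
    { destruct (Req_dec a A); auto. assert (a * b <= a * B) by (apply Rmult_le_compat_l; lra).
      assert (a * B < A * B) by (apply Rmult_lt_compat_r; lra). lra. }
    subst a. split; auto. apply Rmult_eq_reg_l with A; lra.
  - right. assert (Ea : a = -A).
    { destruct (Req_dec a (-A)); auto. assert (a * b <= (-a) * B) by nra.
      assert ((-a) * B < A * B) by (apply Rmult_lt_compat_r; lra). lra. }
    subst a. split; auto. apply Rmult_eq_reg_l with A; lra.
Qed.

Lemma Rabs_lincomb_le (c1 a1 c2 a2 B : R) : Rabs a1 <= B -> Rabs a2 <= B ->
  Rabs (c1 * a1 - c2 * a2) <= (Rabs c1 + Rabs c2) * B.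
Proof.
  intros H1 H2. unfold Rminus. eapply Rle_trans; [apply Rabs_triang|].
  rewrite Rabs_Ropp, !Rabs_mult.
  pose proof (Rabs_pos c1). pose proof (Rabs_pos c2).
  assert (Rabs c1 * Rabs a1 <= Rabs c1 * B) by (apply Rmult_le_compat_l; auto).
  assert (Rabs c2 * Rabs a2 <= Rabs c2 * B) by (apply Rmult_le_compat_l; auto).
  lra.
Qed.

Definition lsum (h : pt -> R) (l : list pt) : R := fold_right (fun a acc => h a + acc) 0 l.

Lemma lsum_ext h h' l : (forall a, In a l -> h a = h' a) -> lsum h l = lsum h' l.
Proof. induction l; simpl; auto. intros H. rewrite H, IHl; auto. Qed.

Lemma lsum_opp h l : lsum (fun a => - h a) l = - lsum h l.
Proof. induction l; simpl; [ring|]. rewrite IHl. ring. Qed.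

Lemma lsum_ge0 h l : (forall a, In a l -> 0 <= h a) -> 0 <= lsum h l.
Proof.
  induction l as [|b l IH]; simpl; intros H; [lra|].
  assert (0 <= h b) by auto. assert (0 <= lsum h l) by auto. lra.
Qed.

Lemma lsum_eq0_ge0 h l : (forall a, In a l -> 0 <= h a) -> lsum h l = 0 ->
  forall a, In a l -> h a = 0.
Proof.
  induction l as [|b l IH]; simpl; [tauto|]. intros H Hs c Hc.
  assert (0 <= h b) by auto. assert (0 <= lsum h l) by (apply lsum_ge0; auto).
  destruct Hc as [<-|Hc]; [lra|]. apply IH; auto. lra.
Qed.

Lemma lsum_pm_count (h : pt -> R) c (sel : pt -> bool) l :
  (forall a, In a l -> (h a = c /\ sel a = true) \/ (h a = -c /\ sel a = false)) ->
  lsum h l = c * (INR (length (filter sel l)) - INR (length (filter (fun a => negb (sel a)) l))).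
Proof.
  induction l as [|b l IH]; intros H; simpl; [ring|].
  rewrite IH by (intros; apply H; simpl; auto).
  destruct (H b (or_introl eq_refl)) as [[E1 E2]|[E1 E2]]; rewrite E1, E2; simpl length;
    rewrite ?S_INR; ring.
Qed.

(** * Nonnegative combinations *)

(* [nncomb l s x]: [x] is a combination of the points of [l] with nonnegative
   weights of total [s]. *)
Fixpoint nncomb (l : list pt) (s : R) (x : pt) : Prop :=
  match l with
  | nil => s = 0 /\ x = (0,0)
  | a :: l' => exists w, 0 <= w /\ nncomb l' (s - w) (vsub x (vscale w a))
  end.

Lemma nncomb_eq l s x s' x' : nncomb l s x -> s = s' -> x = x' -> nncomb l s' x'.
Proof. intros H -> ->. exact H. Qed.

Lemma nncomb_ge0 l s x : nncomb l s x -> 0 <= s.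
Proof.
  revert s x; induction l as [|a l IH]; simpl; intros s x H; [destruct H; lra|].
  destruct H as [w [Hw H]]. apply IH in H. lra.
Qed.

Lemma nncomb_weight0 l x : nncomb l 0 x -> x = (0,0).
Proof.
  revert x; induction l as [|a l IH]; simpl; intros x H; [tauto|].
  destruct H as [w [Hw H]]. pose proof (nncomb_ge0 _ _ _ H).
  replace w with 0 in H by lra. replace (0 - 0) with 0 in H by ring.
  apply IH in H. replace x with (vsub x (vscale 0 a)) by pt_ring. exact H.
Qed.

Lemma nncomb0 l : nncomb l 0 (0,0).
Proof.
  induction l as [|a l IH]; simpl; [auto|]. exists 0. split; [lra|].
  eapply nncomb_eq; [apply IH|ring|pt_ring].
Qed.

Lemma nncomb_add l s x s' x' : nncomb l s x -> nncomb l s' x' -> nncomb l (s + s') (vadd x x').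
Proof.
  revert s x s' x'; induction l as [|a l IH]; simpl; intros s x s' x' H H'.
  - destruct H as [-> ->], H' as [-> ->]. split; [ring|pt_ring].
  - destruct H as [w [Hw H]], H' as [w' [Hw' H']]. exists (w + w'). split; [lra|].
    eapply nncomb_eq; [apply (IH _ _ _ _ H H')|ring|pt_ring].
Qed.

Lemma nncomb_scale l c s x : 0 <= c -> nncomb l s x -> nncomb l (c * s) (vscale c x).
Proof.
  revert s x; induction l as [|a l IH]; simpl; intros s x Hc H.
  - destruct H as [-> ->]. split; [ring|pt_ring].
  - destruct H as [w [Hw H]]. exists (c * w). split; [nra|].
    eapply nncomb_eq; [apply (IH _ _ Hc H)|ring|pt_ring].
Qed.

Lemma nncomb_In l a : In a l -> nncomb l 1 a.
Proof.
  induction l as [|b l IH]; simpl; [tauto|]. intros [<-|H].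
  - exists 1. split; [lra|]. eapply nncomb_eq; [apply nncomb0|ring|pt_ring].
  - exists 0. split; [lra|]. eapply nncomb_eq; [apply IH; auto|ring|pt_ring].
Qed.

Lemma nncomb_conv l x : nncomb l 1 x -> conv l x.
Proof.
  unfold conv. generalize 1 as s. revert x.
  induction l as [|a l IH]; simpl; intros x s H.
  - destruct H as [-> ->]. exists nil. simpl. repeat split; auto. tauto.
  - destruct H as [w [Hw H]]. destruct (IH _ _ H) as [ws [H1 [H2 [H3 H4]]]].
    exists (w :: ws). simpl. split; [auto|]. split; [intros w0 [<-|Hi]; auto|].
    split; [lra|]. rewrite <- H4. pt_ring.
Qed.

(* [diffcomb A p s z]: [z] is a nonnegative combination of the vectors [a - p],
   [a] in [A], with weights of total [s]. *)
Definition diffcomb (A : list pt) (p : pt) (s : R) (z : pt) := nncomb A s (vadd z (vscale s p)).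

Lemma diffcomb_eq A p s z z' : diffcomb A p s z -> z = z' -> diffcomb A p s z'.
Proof. intros H <-. exact H. Qed.

Lemma diffcomb_ge0 A p s z : diffcomb A p s z -> 0 <= s.
Proof. apply nncomb_ge0. Qed.

Lemma diffcomb_In A p a : In a A -> diffcomb A p 1 (vsub a p).
Proof. intros H. eapply nncomb_eq; [apply nncomb_In; eauto|ring|pt_ring]. Qed.

Lemma diffcomb_add A p s z s' z' :
  diffcomb A p s z -> diffcomb A p s' z' -> diffcomb A p (s + s') (vadd z z').
Proof. intros H H'. eapply nncomb_eq; [apply (nncomb_add _ _ _ _ _ H H')|ring|pt_ring]. Qed.

Lemma diffcomb_scale A p c s z : 0 <= c -> diffcomb A p s z -> diffcomb A p (c * s) (vscale c z).
Proof. intros Hc H. eapply nncomb_eq; [apply (nncomb_scale _ _ _ _ Hc H)|ring|pt_ring]. Qed.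

Lemma diffcomb_gt0 A p s z : diffcomb A p s z -> z <> (0,0) -> 0 < s.
Proof.
  intros H Hz. destruct (Rle_lt_or_eq_dec _ _ (diffcomb_ge0 _ _ _ _ H)) as [|<-]; auto.
  exfalso. apply Hz. apply nncomb_weight0 in H. rewrite <- H. pt_ring.
Qed.

Lemma diffcomb_line A p d s s' : diffcomb A p s d -> diffcomb A p s' (vscale (-1) d) ->
  forall t, exists r, r <= Rabs t * (s + s') /\ diffcomb A p r (vscale t d).
Proof.
  intros H1 H2 t. pose proof (diffcomb_ge0 _ _ _ _ H1). pose proof (diffcomb_ge0 _ _ _ _ H2).
  destruct (Rle_lt_dec 0 t) as [Ht|Ht].
  - exists (t * s). rewrite Rabs_pos_eq by auto. split; [nra|]. apply diffcomb_scale; auto.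
  - exists (- t * s'). rewrite Rabs_left by auto. split; [nra|].
    eapply diffcomb_eq; [apply diffcomb_scale; [lra|exact H2]|pt_ring].
Qed.

Lemma nncomb1_of_opposite_diffcomb A p s s' d :
  diffcomb A p s d -> diffcomb A p s' (vscale (-1) d) -> 0 < s + s' -> nncomb A 1 p.
Proof.
  intros H1 H2 Hs.
  pose proof (nncomb_scale _ (/ (s + s')) _ _ ltac:(left; apply Rinv_0_lt_compat; lra)
    (diffcomb_add _ _ _ _ _ _ H1 H2)) as H.
  eapply nncomb_eq; [exact H|field; lra|].
  destruct p, d; unfold vadd, vscale; apply pt_ext; simpl; field; lra.
Qed.

Lemma conv_vadd_of_diffcomb A p r z :
  nncomb A 1 p -> diffcomb A p r z -> r <= 1 -> conv A (vadd p z).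
Proof.
  intros Hp Hz Hr. apply nncomb_conv.
  eapply nncomb_eq; [apply (nncomb_add _ _ _ _ _ Hz (nncomb_scale _ (1 - r) _ _ ltac:(lra) Hp))|
    ring|pt_ring].
Qed.

Lemma exists_max_in (f : pt -> R) (P : pt -> Prop) l : (exists a, In a l /\ P a) ->
  exists m, In m l /\ P m /\ forall a, In a l -> P a -> f a <= f m.
Proof.
  induction l as [|b l IH]; simpl; [firstorder|]. intros Hex.
  destruct (classic (exists a, In a l /\ P a)) as [Hl|Hl].
  - destruct (IH Hl) as [m [Hm [Pm Hmax]]].
    destruct (classic (P b /\ f m < f b)) as [[Pb Hb]|Hb].
    + exists b. split; auto. split; auto. intros a [<-|Ha] Pa; [lra|]. specialize (Hmax a Ha Pa). lra.
    + exists m. split; auto. split; auto. intros a [<-|Ha] Pa; auto.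
      apply Rnot_lt_le. intros Hlt. apply Hb. auto.
  - destruct Hex as [a [[->|Ha] Pa]]; [|exfalso; eauto].
    exists a. split; auto. split; auto. intros c [<-|Hc] Pc; [lra|exfalso; eauto].
Qed.

Section Cone.
Variables (A : list pt) (p z : pt).
Hypothesis Hz : z <> (0,0).

Let S a := dot z (vsub a p).
Let T a := cross z (vsub a p).

Lemma diffcomb_of_ray a : In a A -> T a = 0 -> 0 < S a -> exists s, diffcomb A p s z.
Proof.
  intros Ha HT HS. exists (dot z z / S a * 1).
  eapply diffcomb_eq.
  { apply diffcomb_scale; [|apply (diffcomb_In A p a Ha)].
    left. apply Rdiv_lt_0_compat; auto using dot_self_gt0. }
  apply eq_of_dot_cross; auto.
  - rewrite dot_vscale. change (dot z z / S a * S a = dot z z). field. lra.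
  - rewrite cross_vscale. change (dot z z / S a * T a = 0). rewrite HT. ring.
Qed.

(* [a] and [b] lie strictly on either side of the line [R z]; with the slopes
   [S/T] measured towards [z], a positive total slope means that the segment
   between their directions crosses the ray of [z] (not of [- z]). *)
Lemma diffcomb_of_pair a b : In a A -> In b A -> 0 < T a -> T b < 0 ->
  0 < S a / T a + S b / - T b -> exists s, diffcomb A p s z.
Proof.
  intros Ha Hb HTa HTb Hab. set (k := dot z z / (S a / T a + S b / - T b)).
  assert (Hk : 0 < k) by (apply Rdiv_lt_0_compat; auto using dot_self_gt0).
  exists (k / T a * 1 + k / - T b * 1).
  eapply diffcomb_eq.
  { apply diffcomb_add; apply diffcomb_scale.
    - left. apply Rdiv_lt_0_compat; lra.
    - apply (diffcomb_In A p a Ha).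
    - left. apply Rdiv_lt_0_compat; lra.
    - apply (diffcomb_In A p b Hb). }
  apply eq_of_dot_cross; auto.
  - rewrite dot_vadd, !dot_vscale.
    change (k / T a * S a + k / - T b * S b = dot z z).
    assert (0 < (S a / T a + S b / - T b) * (T a * - T b)) by (apply Rmult_lt_0_compat; nra).
    replace ((S a / T a + S b / - T b) * (T a * - T b)) with (S a * - T b + S b * T a)
      in H by (field; lra).
    unfold k. field. repeat split; lra.
  - rewrite cross_vadd, !cross_vscale.
    change (k / T a * T a + k / - T b * T b = 0). field. lra.
Qed.

Hypothesis Hsep : forall psi, psi <> (0,0) -> exists a, In a A /\ 0 < dot psi (vsub a p).

(* If neither [diffcomb_of_ray] nor [diffcomb_of_pair] applies, the extreme
   slopes [al], [be] of the two sides give the separating direction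
   [z - al (rotated z)]. *)
Lemma diffcomb_of_no_separation : exists s, diffcomb A p s z.
Proof.
  destruct (classic (exists a, In a A /\ T a = 0 /\ 0 < S a)) as [[a [Ha [HT HS]]]|Hray].
  { apply (diffcomb_of_ray a); auto. }
  assert (HL : exists a, In a A /\ 0 < T a).
  { destruct (Hsep (- snd z, fst z)) as [a [Ha Hpos]].
    { intros E. apply Hz. injection E; intros. apply pt_ext; simpl; lra. }
    exists a. split; auto. unfold T, cross, dot in *; simpl in *. lra. }
  assert (HR : exists a, In a A /\ T a < 0).
  { destruct (Hsep (snd z, - fst z)) as [a [Ha Hpos]].
    { intros E. apply Hz. injection E; intros. apply pt_ext; simpl; lra. }
    exists a. split; auto. unfold T, cross, dot in *; simpl in *. lra. }
  destruct (exists_max_in (fun a => S a / T a) (fun a => 0 < T a) A HL)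
    as [a [Ha [HTa Hmaxa]]].
  destruct (exists_max_in (fun a => S a / - T a) (fun a => T a < 0) A HR)
    as [b [Hb [HTb Hmaxb]]].
  set (al := S a / T a) in *. set (be := S b / - T b) in *.
  destruct (Rlt_dec 0 (al + be)) as [Hab|Hab]; [apply (diffcomb_of_pair a b); auto|].
  exfalso.
  set (psi := (fst z + al * snd z, snd z - al * fst z)).
  assert (Hpsi : psi <> (0,0)).
  { intros E. apply Hz. injection E; intros.
    assert (Hz2 : snd z * (1 + al * al) = 0) by nra.
    apply Rmult_integral in Hz2. destruct Hz2 as [Hz2|]; [|nra].
    apply pt_ext; simpl; nra. }
  destruct (Hsep psi Hpsi) as [c [Hc Hpos]].
  replace (dot psi (vsub c p)) with (S c - al * T c) in Hpos
    by (unfold psi, S, T, dot, cross; simpl; ring).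
  destruct (Rtotal_order (T c) 0) as [Hn|[H0|Hp]].
  - specialize (Hmaxb c Hc Hn). fold be in Hmaxb.
    apply Rmult_le_compat_r with (r := - T c) in Hmaxb; [|lra].
    replace (S c / - T c * - T c) with (S c) in Hmaxb by (field; lra). nra.
  - apply Hray. exists c. rewrite H0 in Hpos. repeat split; auto. lra.
  - specialize (Hmaxa c Hc Hp). fold al in Hmaxa.
    apply Rmult_le_compat_r with (r := T c) in Hmaxa; [|lra].
    replace (S c / T c * T c) with (S c) in Hmaxa by (field; lra). lra.
Qed.

End Cone.

Section Norm.
Variable N : pt -> R.
Hypothesis HN : is_norm N.

Lemma norm_scale k x : N (vscale k x) = Rabs k * N x.
Proof. apply HN. Qed.

Lemma norm_triangle x y : N (vadd x y) <= N x + N y.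
Proof. apply HN. Qed.

Lemma norm_eq0 x : N x = 0 -> x = (0,0).
Proof. apply HN. Qed.

Lemma norm_scale_nonneg k x : 0 <= k -> N (vscale k x) = k * N x.
Proof. intros. rewrite norm_scale, Rabs_pos_eq; auto. Qed.

Lemma norm_zero : N (0,0) = 0.
Proof.
  replace (0,0) with (vscale 0 (0,0)) by pt_ring.
  rewrite norm_scale, Rabs_R0. ring.
Qed.

Lemma norm_opp x : N (vscale (-1) x) = N x.
Proof. rewrite norm_scale, Rabs_left by lra. ring. Qed.

Lemma norm_ge0 x : 0 <= N x.
Proof.
  pose proof (norm_triangle x (vscale (-1) x)) as H.
  rewrite norm_opp in H. replace (vadd x (vscale (-1) x)) with ((0,0):pt) in H by pt_ring.
  rewrite norm_zero in H. lra.
Qed.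

Lemma norm_gt0 x : x <> (0,0) -> 0 < N x.
Proof.
  intros Hx. destruct (norm_ge0 x) as [|E]; auto.
  exfalso. apply Hx, norm_eq0. auto.
Qed.

Lemma norm_normalize x : x <> (0,0) -> N (vscale (/ N x) x) = 1.
Proof.
  intros Hx. pose proof (norm_gt0 x Hx).
  rewrite norm_scale_nonneg by (left; apply Rinv_0_lt_compat; auto). field. lra.
Qed.

Definition norm_line (x d : pt) (t : R) := N (vadd x (vscale t d)).

Lemma norm_line0 x d : norm_line x d 0 = N x.
Proof. unfold norm_line. f_equal. pt_ring. Qed.

Lemma norm_line_convex x d a b l : 0 <= l <= 1 ->
  norm_line x d (l * a + (1 - l) * b) <= l * norm_line x d a + (1 - l) * norm_line x d b.
Proof.
  intros Hl. unfold norm_line.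
  replace (vadd x (vscale (l * a + (1 - l) * b) d)) with
    (vadd (vscale l (vadd x (vscale a d))) (vscale (1-l) (vadd x (vscale b d)))) by pt_ring.
  eapply Rle_trans; [apply norm_triangle|].
  rewrite !norm_scale_nonneg by lra. lra.
Qed.

(* Convex combination [0 = l t1 + (1 - l) t2] with [l = t2 / (t2 - t1)]. *)
Lemma norm_line_slope_lr x d t1 t2 : t1 < 0 < t2 ->
  (N x - norm_line x d t1) * t2 <= (norm_line x d t2 - N x) * (- t1).
Proof.
  intros [H1 H2]. set (l := t2 / (t2 - t1)).
  assert (Hl : 0 <= l <= 1).
  { unfold l; split; [apply Rmult_le_pos; [lra|]; left; apply Rinv_0_lt_compat; lra|].
    apply Rmult_le_reg_r with (t2 - t1); [lra|]. field_simplify; lra. }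
  pose proof (norm_line_convex x d t1 t2 l Hl) as H.
  replace (l * t1 + (1 - l) * t2) with 0 in H by (unfold l; field; lra).
  rewrite norm_line0 in H.
  assert (E1 : l * (t2 - t1) = t2) by (unfold l; field; lra).
  assert (E2 : (1 - l) * (t2 - t1) = - t1) by (unfold l; field; lra).
  apply Rmult_le_compat_r with (r := t2 - t1) in H; [|lra].
  replace ((l * norm_line x d t1 + (1 - l) * norm_line x d t2) * (t2 - t1)) with
    (norm_line x d t1 * (l * (t2 - t1)) + norm_line x d t2 * ((1 - l) * (t2 - t1))) in H by ring.
  rewrite E1, E2 in H. lra.
Qed.

Lemma norm_line_slope_mono x d t t0 : 0 < t <= t0 ->
  (norm_line x d t - N x) * t0 <= (norm_line x d t0 - N x) * t.
Proof.
  intros [H1 H2]. set (l := t / t0).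
  assert (Hl : 0 <= l <= 1).
  { unfold l; split; [apply Rmult_le_pos; [lra|]; left; apply Rinv_0_lt_compat; lra|].
    apply Rmult_le_reg_r with t0; [lra|]. field_simplify; lra. }
  pose proof (norm_line_convex x d t0 0 l Hl) as H.
  replace (l * t0 + (1 - l) * 0) with t in H by (unfold l; field; lra).
  rewrite norm_line0 in H.
  assert (E : l * t0 = t) by (unfold l; field; lra).
  apply Rmult_le_compat_r with (r := t0) in H; [|lra].
  replace ((l * norm_line x d t0 + (1 - l) * N x) * t0) with
    (norm_line x d t0 * (l * t0) + N x * (t0 - l * t0)) in H by ring.
  rewrite E in H. lra.
Qed.

(** * Norming functionals *)

Definition norming (x f : pt) := (forall y, dot f y <= N y) /\ dot f x = N x.

Lemma norming_bounds x f y : norming x f -> - N y <= dot f y <= N y.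
Proof.
  intros [Hle _]. split; [|apply Hle].
  pose proof (Hle (vscale (-1) y)) as H. rewrite norm_opp, dot_vscale in H. lra.
Qed.

Lemma norming_neq0 x f : x <> (0,0) -> norming x f -> f <> (0,0).
Proof.
  intros Hx [_ Hfx] ->. pose proof (norm_gt0 x Hx).
  unfold dot in Hfx; simpl in Hfx. lra.
Qed.

(* Solve [dot f x = N x], [dot f d = s] (the determinant is [cross x d]); [f <= N]
   follows from the subgradient inequality on the half-plane where [y] is a
   positive multiple of a point of the line [x + R d], and then everywhere
   after translating by a large multiple of [x]. *)
Lemma norming_of_subgradient x d s : cross x d <> 0 ->
  (forall t, N x + s * t <= norm_line x d t) -> exists f, norming x f /\ dot f d = s.
Proof.
  intros Hc Hsub. set (c := cross x d) in *.
  set (f := ((N x * snd d - s * snd x) / c, (s * fst x - N x * fst d) / c)).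
  assert (Hfx : dot f x = N x) by (unfold f, dot, c, cross; simpl; field; auto).
  assert (Hfd : dot f d = s) by (unfold f, dot, c, cross; simpl; field; auto).
  assert (Hpos : forall y, 0 < cross y d / c -> dot f y <= N y).
  { intros y Ha. set (al := cross y d / c) in *. set (be := cross x y / c).
    assert (Ey : y = vadd (vscale al x) (vscale be d)).
    { unfold al, be, c, cross in *. destruct x, y, d. unfold vscale, vadd; simpl in *.
      apply pt_ext; simpl; field; auto. }
    replace (vadd (vscale al x) (vscale be d)) with (vscale al (vadd x (vscale (be / al) d)))
      in Ey by (apply pt_ext; unfold vscale, vadd; simpl; field; lra).
    assert (Efy : dot f y = al * N x + be * s).
    { unfold f, al, be, c, dot, cross; simpl; field; auto. }
    rewrite Efy, Ey, norm_scale_nonneg by lra.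
    specialize (Hsub (be / al)). unfold norm_line in Hsub.
    apply Rle_trans with (al * (N x + s * (be / al))); [right; field; lra|].
    apply Rmult_le_compat_l; lra. }
  exists f. split; [split|]; auto. intros y.
  set (k := Rabs (cross y d / c) + 1).
  assert (Hk : 0 < k) by (pose proof (Rabs_pos (cross y d / c)); unfold k; lra).
  assert (Hyk : dot f (vadd y (vscale k x)) <= N (vadd y (vscale k x))).
  { apply Hpos. replace (cross (vadd y (vscale k x)) d / c) with (cross y d / c + k)
      by (unfold c, cross, vadd, vscale; simpl; field; auto).
    pose proof (Rle_abs (- (cross y d / c))). rewrite Rabs_Ropp in H. unfold k. lra. }
  pose proof (norm_triangle y (vscale k x)) as Htri.
  rewrite norm_scale_nonneg in Htri by lra.
  rewrite dot_vadd, dot_vscale, Hfx in Hyk. lra.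
Qed.

(* The slope of [norm_line x d] at [0] is taken as the supremum of its left
   difference quotients. *)
Lemma exists_norming x : x <> (0,0) -> exists f, norming x f.
Proof.
  intros Hx. set (d := (- snd x, fst x)).
  assert (Hc : cross x d <> 0).
  { pose proof (pt_neq0_sqr x Hx). unfold cross, d; simpl. lra. }
  set (g := norm_line x d).
  set (E := fun q => exists t, t < 0 /\ q = (g t - N x) / t).
  assert (Hb : bound E).
  { exists (g 1 - N x). intros q [t [Ht ->]].
    pose proof (norm_line_slope_lr x d t 1 (conj Ht Rlt_0_1)).
    apply Rmult_le_reg_r with (-t); [lra|].
    replace ((g t - N x) / t * - t) with (N x - g t) by (field; lra). unfold g. lra. }
  assert (He : exists q, E q) by (exists ((g (-1) - N x) / (-1)), (-1); split; [lra|auto]).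
  destruct (completeness E Hb He) as [s [Hub Hlub]].
  assert (Hsub : forall t, N x + s * t <= g t).
  { intros t. destruct (Rtotal_order t 0) as [Ht|[->|Ht]].
    - assert (Hq : (g t - N x) / t <= s) by (apply Hub; exists t; split; auto).
      apply Rmult_le_compat_neg_l with (r := t) in Hq; [|lra].
      replace (t * ((g t - N x) / t)) with (g t - N x) in Hq by (field; lra). nra.
    - unfold g. rewrite norm_line0. lra.
    - assert (Hq : s <= (g t - N x) / t).
      { apply Hlub. intros q [t' [Ht' ->]].
        pose proof (norm_line_slope_lr x d t' t (conj Ht' Ht)).
        apply Rmult_le_reg_r with (- t' * t); [nra|].
        replace ((g t' - N x) / t' * (- t' * t)) with ((N x - g t') * t) by (field; lra).
        replace ((g t - N x) / t * (- t' * t)) with ((g t - N x) * (- t')) by (field; lra).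
        unfold g. lra. }
      apply Rmult_le_compat_r with (r := t) in Hq; [|lra].
      replace ((g t - N x) / t * t) with (g t - N x) in Hq by (field; lra). lra. }
  destruct (norming_of_subgradient x d s Hc Hsub) as [f [Hf _]]. eauto.
Qed.

Definition norming_fun (x : pt) : pt := epsilon (inhabits ((0,0):pt)) (norming x).

Lemma norming_funP x : x <> (0,0) -> norming x (norming_fun x).
Proof. intros Hx. unfold norming_fun. apply epsilon_spec, exists_norming, Hx. Qed.

Definition level1 (f : pt) : pt -> Prop := fun q => dot f q = 1.

Lemma level1_supporting x f : x <> (0,0) -> norming x f ->
  supporting_line N (level1 f) /\ level1 f (vscale (/ N x) x).
Proof.
  intros Hx Hf. pose proof (norm_gt0 x Hx).
  assert (Hu : level1 f (vscale (/ N x) x)).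
  { unfold level1. rewrite dot_vscale, (proj2 Hf). field. lra. }
  split; auto.
  exists (fst f), (snd f), 1. split.
  { destruct (Req_dec (fst f) 0); [right|left; auto]. intros E.
    apply (norming_neq0 x f Hx Hf). apply pt_ext; auto. }
  split; [reflexivity|]. split.
  - exists (vscale (/ N x) x). split; auto. unfold ball_B. rewrite norm_normalize; auto. lra.
  - left. intros y Hy. apply Rle_trans with (N y); auto. apply (proj1 Hf).
Qed.

Lemma level1_face v g : v <> (0,0) -> norming v g ->
  proper_exposed_face N (fun q => ball_B N q /\ level1 g q).
Proof.
  intros Hv Hg. exists (level1 g). split; [|tauto]. apply (level1_supporting v g Hv Hg).
Qed.

Lemma norming_unit_in_face z g : z <> (0,0) -> norming z g ->
  ball_B N (vscale (/ N z) z) /\ level1 g (vscale (/ N z) z).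
Proof.
  intros Hz Hg. split; [unfold ball_B; rewrite norm_normalize; auto; lra|].
  apply (level1_supporting z g Hz Hg).
Qed.

Lemma norming_vadd u w g : norming u g -> norming w g -> norming (vadd u w) g.
Proof.
  intros [Hle Hu] [_ Hw]. split; auto.
  pose proof (Hle (vadd u w)). pose proof (norm_triangle u w).
  rewrite dot_vadd in *. lra.
Qed.

(* [g] norms [x - y = (x - p) + (p - y)], so the direction of [x - y] lies in
   the exposed face [{g = 1}] of the unit ball. *)
Lemma double_cluster_of_norming_split A p v g (sel : pt -> bool) :
  NoDup A -> A <> nil -> v <> (0,0) -> norming v g ->
  (forall a, In a A -> sel a = true -> norming (vsub p a) g) ->
  (forall a, In a A -> sel a = false -> norming (vsub a p) g) ->
  length (filter (fun a => negb (sel a)) A) = length (filter sel A) ->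
  is_double_cluster N (fun z => In z A).
Proof.
  intros HA Hne Hv Hg Hys Hxs Hlen.
  set (xs := filter (fun a => negb (sel a)) A). set (ys := filter sel A).
  exists xs, ys. split; [split; [exact Hlen|split]|].
  - pose proof (filter_length sel A). fold ys xs in H.
    assert (length A <> 0%nat) by (destruct A; simpl; congruence). fold xs ys in Hlen. lia.
  - split.
    + apply NoDup_app; try apply NoDup_filter; auto.
      intros a Ha Hb. apply filter_In in Ha, Hb.
      destruct Ha as [_ Ha], Hb as [_ Hb]. rewrite Hb in Ha. discriminate.
    + exists (fun q => ball_B N q /\ level1 g q). split; [apply (level1_face v g Hv Hg)|].
      intros [x y] Hxy. simpl.
      pose proof (in_combine_l _ _ _ _ Hxy) as Hx. pose proof (in_combine_r _ _ _ _ Hxy) as Hy.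
      apply filter_In in Hx, Hy. destruct Hx as [Hx Hsx], Hy as [Hy Hsy].
      assert (Hsx' : sel x = false) by (destruct (sel x); simpl in *; congruence).
      assert (Hxy' : x <> y) by (intros ->; congruence).
      apply norming_unit_in_face; [apply vsub_neq0; auto|].
      replace (vsub x y) with (vadd (vsub x p) (vsub p y)) by pt_ring.
      apply norming_vadd; auto.
  - intros z. rewrite in_app_iff. unfold xs, ys. rewrite !filter_In.
    destruct (sel z); simpl; tauto.
Qed.

(* Two linearly independent functionals bounded by [N] recover both coordinates:
   a norming functional [f] of [(1,0)] and a norming functional [h] of its
   rotation, which satisfy [cross f h = N (rotation of f) > 0]. *)
Lemma coord_le_norm : exists K, 0 < K /\ forall z,
  Rabs (fst z) <= K * N z /\ Rabs (snd z) <= K * N z.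
Proof.
  assert (He1 : ((1,0):pt) <> (0,0)) by (intro E; injection E; lra).
  set (f := norming_fun (1,0)). pose proof (norming_funP _ He1) as Hf. fold f in Hf.
  set (w := (- snd f, fst f)).
  assert (Hw : w <> (0,0)).
  { intros E. apply (norming_neq0 _ _ He1 Hf). injection E; intros.
    apply pt_ext; simpl; lra. }
  set (h := norming_fun w). pose proof (norming_funP _ Hw) as Hh. fold h in Hh.
  set (D := dot h w).
  assert (HD : 0 < D) by (unfold D; rewrite (proj2 Hh); apply norm_gt0; auto).
  pose proof (Rabs_pos (fst f)). pose proof (Rabs_pos (snd f)).
  pose proof (Rabs_pos (fst h)). pose proof (Rabs_pos (snd h)).
  set (C := Rabs (fst f) + Rabs (snd f) + Rabs (fst h) + Rabs (snd h)).
  exists ((C + 1) / D). split; [apply Rdiv_lt_0_compat; unfold C; lra|]. intros z.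
  assert (Bf : Rabs (dot f z) <= N z) by (apply Rabs_le, (norming_bounds _ _ z Hf)).
  assert (Bh : Rabs (dot h z) <= N z) by (apply Rabs_le, (norming_bounds _ _ z Hh)).
  pose proof (norm_ge0 z).
  assert (E1 : fst z * D = snd h * dot f z - snd f * dot h z) by (unfold D, w, dot; simpl; ring).
  assert (E2 : snd z * D = fst f * dot h z - fst h * dot f z) by (unfold D, w, dot; simpl; ring).
  pose proof (Rabs_lincomb_le (snd h) (dot f z) (snd f) (dot h z) (N z) Bf Bh) as C1.
  pose proof (Rabs_lincomb_le (fst f) (dot h z) (fst h) (dot f z) (N z) Bh Bf) as C2.
  rewrite <- E1 in C1. rewrite <- E2 in C2.
  rewrite Rabs_mult, (Rabs_pos_eq D) in C1, C2 by lra.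
  replace ((C + 1) / D * N z) with ((C + 1) * N z / D) by (field; lra).
  assert ((Rabs (snd h) + Rabs (snd f)) * N z <= C * N z)
    by (apply Rmult_le_compat_r; unfold C; lra).
  assert ((Rabs (fst f) + Rabs (fst h)) * N z <= C * N z)
    by (apply Rmult_le_compat_r; unfold C; lra).
  split; apply Rmult_le_reg_r with D; auto; unfold Rdiv; rewrite Rmult_assoc, Rinv_l; lra.
Qed.

(* The vectors [a - p] positively span [+-(1,0)] and [+-(0,1)], hence every
   [q - p] with a total weight proportional to [N (q - p)], by [coord_le_norm]. *)
Lemma conv_interior_of_no_separation A p :
  (forall psi, psi <> (0,0) -> exists a, In a A /\ 0 < dot psi (vsub a p)) ->
  norm_interior N (conv A) p.
Proof.
  intros Hsep. pose proof (fun z Hz => diffcomb_of_no_separation A p z Hz Hsep) as Hcomb.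
  set (e1 := ((1,0) : pt)). set (e2 := ((0,1) : pt)).
  assert (N1 : e1 <> (0,0)) by (intro E; injection E; lra).
  assert (N2 : e2 <> (0,0)) by (intro E; injection E; lra).
  assert (N1' : vscale (-1) e1 <> (0,0)) by (intro E; injection E; lra).
  assert (N2' : vscale (-1) e2 <> (0,0)) by (intro E; injection E; lra).
  destruct (Hcomb e1 N1) as [s1 H1]. destruct (Hcomb _ N1') as [s2 H2].
  destruct (Hcomb e2 N2) as [s3 H3]. destruct (Hcomb _ N2') as [s4 H4].
  pose proof (diffcomb_gt0 _ _ _ _ H1 N1). pose proof (diffcomb_gt0 _ _ _ _ H2 N1').
  pose proof (diffcomb_gt0 _ _ _ _ H3 N2). pose proof (diffcomb_gt0 _ _ _ _ H4 N2').
  pose proof (nncomb1_of_opposite_diffcomb _ _ _ _ _ H1 H2 ltac:(lra)) as Hp.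
  destruct coord_le_norm as [K [HK HKb]].
  set (M := s1 + s2 + s3 + s4).
  assert (HKM : 0 < K * M) by (unfold M; nra).
  exists (/ (K * M)). split; [apply Rinv_0_lt_compat; auto|]. intros q Hq.
  set (z := vsub q p) in *.
  destruct (diffcomb_line _ _ _ _ _ H1 H2 (fst z)) as [r1 [Hr1 R1]].
  destruct (diffcomb_line _ _ _ _ _ H3 H4 (snd z)) as [r2 [Hr2 R2]].
  replace q with (vadd p (vadd (vscale (fst z) e1) (vscale (snd z) e2)))
    by (unfold z, e1, e2, vadd, vsub, vscale; destruct p, q; apply pt_ext; simpl; ring).
  apply (conv_vadd_of_diffcomb _ _ (r1 + r2)); auto using diffcomb_add.
  destruct (HKb z) as [B1 B2]. pose proof (norm_ge0 z).
  assert (Hnz : N z * (K * M) < 1).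
  { apply Rmult_lt_reg_r with (/ (K * M)); [apply Rinv_0_lt_compat; auto|].
    rewrite Rmult_assoc, Rinv_r, Rmult_1_r by lra. lra. }
  assert (r1 <= K * N z * (s1 + s2))
    by (eapply Rle_trans; [apply Hr1|]; apply Rmult_le_compat_r; lra).
  assert (r2 <= K * N z * (s3 + s4))
    by (eapply Rle_trans; [apply Hr2|]; apply Rmult_le_compat_r; lra).
  unfold M in *. nra.
Qed.

Section Smooth.
Hypothesis Hsm : smooth N.

(* Both level lines support the ball at [x / N x], so they coincide; then
   [f'] vanishes on the direction of [level1 f], which makes it parallel to [f]. *)
Lemma norming_unique x f f' : x <> (0,0) -> norming x f -> norming x f' -> f = f'.
Proof.
  intros Hx Hf Hf'.
  destruct (level1_supporting x f Hx Hf) as [S1 U1].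
  destruct (level1_supporting x f' Hx Hf') as [S2 U2].
  pose proof (Hsm _ (norm_normalize x Hx) _ _ S1 S2 U1 U2) as Heq.
  set (u := vscale (/ N x) x) in *. clearbody u.
  assert (Hq : level1 f (vadd u (- snd f, fst f))).
  { unfold level1 in *. rewrite dot_vadd, U1. unfold dot; simpl; ring. }
  apply Heq in Hq. unfold level1 in *. rewrite dot_vadd, U2 in Hq.
  apply (eq_of_cross0 f f' u); [|congruence|lra].
  unfold dot, cross in *; simpl in *. lra.
Qed.

(* [dot (norming_fun x) d] is the right derivative of [norm_line x d] at [0]:
   a larger slope would yield, by [norming_of_subgradient], a second norming
   functional of [x]. *)
Lemma norm_line_right_deriv x d e : x <> (0,0) -> 0 < e ->
  exists t0, 0 < t0 /\ forall t, 0 < t <= t0 ->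
    norm_line x d t <= N x + t * (dot (norming_fun x) d + e).
Proof.
  intros Hx He. set (f := norming_fun x). pose proof (norming_funP x Hx) as Hf. fold f in Hf.
  destruct (Req_dec (cross x d) 0) as [Hc|Hc].
  - (* On the line through [x] the norm is linear near [x]. *)
    set (k := dot x d / dot x x).
    assert (Ed : d = vscale k x) by (apply parallel_eq_scale; auto).
    exists (/ (Rabs k + 1)). split; [apply Rinv_0_lt_compat; pose proof (Rabs_pos k); lra|].
    intros t [Ht0 Ht].
    assert (Htk : 0 < 1 + t * k).
    { pose proof (Rle_abs (- k)) as Hk. rewrite Rabs_Ropp in Hk.
      apply Rmult_le_compat_r with (r := Rabs k + 1) in Ht; [|pose proof (Rabs_pos k); lra].
      rewrite Rinv_l in Ht by (pose proof (Rabs_pos k); lra). nra. }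
    unfold norm_line. rewrite Ed.
    replace (vadd x (vscale t (vscale k x))) with (vscale (1 + t * k) x) by pt_ring.
    rewrite norm_scale_nonneg, dot_vscale, (proj2 Hf) by lra. nra.
  - set (s := dot f d + e).
    destruct (classic (exists t0, 0 < t0 /\ norm_line x d t0 < N x + t0 * s))
      as [[t0 [Ht0 Hlt]]|Hno].
    + exists t0. split; auto. intros t Ht.
      pose proof (norm_line_slope_mono x d t t0 Ht).
      assert (norm_line x d t - N x < t * s); [|unfold s in *; lra].
      apply Rmult_lt_reg_r with t0; [lra|]. nra.
    + exfalso.
      assert (Hsub : forall t, N x + s * t <= norm_line x d t).
      { intros t. destruct (Rtotal_order t 0) as [Ht|[->|Ht]].
        - unfold norm_line. eapply Rle_trans; [|apply (proj1 Hf)].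
          rewrite dot_vadd, dot_vscale, (proj2 Hf). unfold s. nra.
        - rewrite norm_line0. lra.
        - apply Rnot_lt_le. intro Hlt. apply Hno. exists t. split; auto. lra. }
      destruct (norming_of_subgradient x d s Hc Hsub) as [f' [Hf' Hd]].
      rewrite <- (norming_unique x f f' Hx Hf Hf') in Hd. unfold s in Hd. lra.
Qed.

Lemma sumdist_right_deriv p d l : (forall a, In a l -> p <> a) -> forall e, 0 < e ->
  exists t0, 0 < t0 /\ forall t, 0 < t <= t0 ->
    sumdist N l (vadd p (vscale t d)) <=
    sumdist N l p + t * (lsum (fun a => dot (norming_fun (vsub p a)) d) l + INR (length l) * e).
Proof.
  intros Hl e He. induction l as [|a l IH].
  { exists 1. split; [lra|]. intros t Ht. simpl. lra. }
  destruct IH as [t2 [Ht2 H2]]; [intros; apply Hl; simpl; auto|].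
  assert (Hx : vsub p a <> (0,0)) by (apply vsub_neq0, Hl; simpl; auto).
  destruct (norm_line_right_deriv (vsub p a) d e Hx He) as [t1 [Ht1 H1]].
  exists (Rmin t1 t2). split; [apply Rmin_glb_lt; auto|]. intros t Ht.
  specialize (H1 t ltac:(split; [lra|]; eapply Rle_trans; [apply Ht|apply Rmin_l])).
  specialize (H2 t ltac:(split; [lra|]; eapply Rle_trans; [apply Ht|apply Rmin_r])).
  simpl length. rewrite S_INR. simpl.
  replace (vsub (vadd p (vscale t d)) a) with (vadd (vsub p a) (vscale t d)) by pt_ring.
  unfold norm_line in H1. lra.
Qed.

Lemma FT_norming_sum_eq0 A p : ~ In p A -> FT N A p ->
  forall d, lsum (fun a => dot (norming_fun (vsub p a)) d) A = 0.
Proof.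
  intros Hp Hft.
  assert (Hge : forall d, 0 <= lsum (fun a => dot (norming_fun (vsub p a)) d) A).
  { intros d. apply Rnot_lt_le. intro HS.
    set (S := lsum (fun a => dot (norming_fun (vsub p a)) d) A) in *.
    set (n := INR (length A)). assert (Hn : 0 <= n) by apply pos_INR.
    set (e := - S / (2 * (n + 1))).
    assert (He : 0 < e) by (unfold e; apply Rdiv_lt_0_compat; lra).
    destruct (sumdist_right_deriv p d A ltac:(intros a Ha ->; auto) e He) as [t0 [Ht0 H]].
    specialize (H t0 (conj Ht0 (Rle_refl _))). fold S n in H.
    assert (Hne : n * e <= - S / 2).
    { unfold e. apply Rmult_le_reg_r with (2 * (n + 1)); [lra|]. field_simplify; [|lra]. nra. }
    pose proof (Hft (vadd p (vscale t0 d))). nra. }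
  intros d. pose proof (Hge d). pose proof (Hge (vscale (-1) d)) as Hopp.
  rewrite (lsum_ext _ (fun a => - dot (norming_fun (vsub p a)) d)) in Hopp
    by (intros a _; rewrite dot_vscale; ring).
  rewrite lsum_opp in Hopp. lra.
Qed.

(* Monotonicity of the norming map; the equality case [cross v u = 0] needs
   the uniqueness of norming functionals. *)
Lemma norming_cross_ge0 u v f g : u <> (0,0) -> v <> (0,0) ->
  norming u f -> norming v g -> 0 <= cross v u -> 0 <= cross g f.
Proof.
  intros Hu Hv Hf Hg Huv. pose proof (cross_mul_cross g f v u) as Hbc.
  rewrite (proj2 Hf), (proj2 Hg) in Hbc.
  pose proof (norm_gt0 u Hu). pose proof (norm_gt0 v Hv).
  pose proof (norming_bounds v g u Hg). pose proof (norming_bounds u f v Hf).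
  destruct Huv as [Hlt|Heq]; [nra|]. rewrite <- Heq, Rmult_0_r in Hbc.
  destruct (mul_eq_bounds_cases (N u) (N v) (dot g u) (dot f v)) as [[_ E]|[_ E]];
    auto; try lra.
  - rewrite (norming_unique v f g Hv (conj (proj1 Hf) E) Hg). unfold cross; lra.
  - assert (Hf' : norming v (vscale (-1) f)).
    { split; [intros y; rewrite dot_vscalel; pose proof (norming_bounds u f y Hf); lra|].
      rewrite dot_vscalel, E. ring. }
    rewrite <- (norming_unique v _ g Hv Hf' Hg). unfold cross, vscale; simpl; lra.
Qed.

Lemma norming_cross0_cases u v f g : u <> (0,0) -> v <> (0,0) ->
  norming u f -> norming v g -> cross g f = 0 ->
  (norming u g /\ dot f v = N v) \/ (norming (vscale (-1) u) g /\ dot f v = - N v).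
Proof.
  intros Hu Hv Hf Hg Hgf. pose proof (cross_mul_cross g f v u) as Hbc.
  rewrite (proj2 Hf), (proj2 Hg), Hgf, Rmult_0_l in Hbc.
  pose proof (norming_bounds v g u Hg). pose proof (norming_bounds u f v Hf).
  destruct (mul_eq_bounds_cases (N u) (N v) (dot g u) (dot f v)) as [[E1 E2]|[E1 E2]];
    auto using norm_gt0; try lra.
  - left. split; auto. split; auto. apply Hg.
  - right. split; auto. split; [apply Hg|]. rewrite dot_vscale, norm_opp, E1. ring.
Qed.

(* The [norming_fun (p - a)] sum to [0] and, by monotonicity, all lie weakly on
   one side of [g]; so each is [g] or [- g], and [g] norms [p - a] or [a - p]. *)
Lemma FT_halfplane_norming_cases A p v g : ~ In p A -> FT N A p ->
  v <> (0,0) -> norming v g -> (forall a, In a A -> 0 <= cross v (vsub p a)) ->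
  forall a, In a A ->
    (norming (vsub p a) g /\ dot (norming_fun (vsub p a)) v = N v) \/
    (norming (vsub a p) g /\ dot (norming_fun (vsub p a)) v = - N v).
Proof.
  intros Hp Hft Hv Hg Hside.
  assert (Hu : forall a, In a A -> vsub p a <> (0,0))
    by (intros a Ha; apply vsub_neq0; intros ->; auto).
  assert (Hge : forall a, In a A -> 0 <= cross g (norming_fun (vsub p a)))
    by (intros a Ha; apply (norming_cross_ge0 (vsub p a) v); auto using norming_funP).
  assert (Hcross0 : forall a, In a A -> cross g (norming_fun (vsub p a)) = 0).
  { apply lsum_eq0_ge0; auto.
    rewrite (lsum_ext _ (fun a => dot (norming_fun (vsub p a)) (- snd g, fst g)))
      by (intros a _; unfold cross, dot; simpl; ring).
    apply (FT_norming_sum_eq0 A p Hp Hft). }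
  intros a Ha.
  destruct (norming_cross0_cases (vsub p a) v (norming_fun (vsub p a)) g)
    as [[Hn E]|[Hn E]]; auto using norming_funP.
  right. split; auto. replace (vsub a p) with (vscale (-1) (vsub p a)) by pt_ring. exact Hn.
Qed.

Lemma FT_halfplane_double_cluster A p psi :
  NoDup A -> A <> nil -> ~ In p A -> FT N A p -> psi <> (0,0) ->
  (forall a, In a A -> dot psi (vsub a p) <= 0) ->
  is_double_cluster N (fun z => In z A).
Proof.
  intros HA Hne Hp Hft Hpsi Hsep.
  set (v := (snd psi, - fst psi)).
  assert (Hv : v <> (0,0)).
  { intros E. apply Hpsi. injection E; intros. apply pt_ext; simpl; lra. }
  set (g := norming_fun v). pose proof (norming_funP v Hv) as Hg. fold g in Hg.
  pose proof (norm_gt0 v Hv).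
  assert (Hcase := FT_halfplane_norming_cases A p v g Hp Hft Hv Hg).
  specialize (Hcase ltac:(intros a Ha; specialize (Hsep a Ha);
    unfold cross, dot, vsub, v in *; simpl in *; lra)).
  set (sel := fun a => if Rlt_dec 0 (dot (norming_fun (vsub p a)) v) then true else false).
  assert (Hsel : forall a, In a A -> (norming (vsub p a) g /\ sel a = true) \/
    (norming (vsub a p) g /\ sel a = false)).
  { intros a Ha. unfold sel.
    destruct (Hcase a Ha) as [[Hn ->]|[Hn ->]]; [left|right];
      (split; [exact Hn|]); destruct Rlt_dec; auto; lra. }
  apply (double_cluster_of_norming_split A p v g sel HA Hne Hv Hg).
  - intros a Ha Hs. destruct (Hsel a Ha) as [[? _]|[_ E]]; [auto|congruence].
  - intros a Ha Hs. destruct (Hsel a Ha) as [[_ E]|[? _]]; [congruence|auto].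
  - assert (Hc : lsum (fun a => dot (norming_fun (vsub p a)) v) A = N v *
      (INR (length (filter sel A)) - INR (length (filter (fun a => negb (sel a)) A)))).
    { apply lsum_pm_count. intros a Ha. unfold sel.
      destruct (Hcase a Ha) as [[_ ->]|[_ ->]]; destruct Rlt_dec; auto; lra. }
    rewrite (FT_norming_sum_eq0 A p Hp Hft v) in Hc.
    apply INR_eq, Rmult_eq_reg_l with (N v); lra.
Qed.

End Smooth.

End Norm.

Theorem corollary4p9 (N : pt -> R) (HN : is_norm N) (Hsm : smooth N)
  (A : list pt) (HA : NoDup A) (Hne : A <> nil)
  (Hdc : ~ is_double_cluster N (fun z => In z A))
  (Hpdc : ~ is_pseudo_double_cluster N (fun z => In z A)) :
  forall p, FT N A p -> In p A \/ norm_interior N (conv A) p.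
Proof.
  intros p Hft. destruct (classic (In p A)) as [Hp|Hp]; [left; auto|right].
  apply (conv_interior_of_no_separation N HN). intros psi Hpsi.
  apply NNPP. intros Hno. apply Hdc.
  apply (FT_halfplane_double_cluster N HN Hsm A p psi HA Hne Hp Hft Hpsi).
  intros a Ha. apply Rnot_lt_le. intros Hlt. eauto.
Qed.
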